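(* Let $\mathcal{S}\subseteq\mathcal{G}$ with $|\mathcal{S}|=H$ and $t\in[T]$. Suppose Assumptions 1 and 2 hold and $\|K^{(t)}_{k,\mathcal{S}}-\hat K^{(t)}_{k,\mathcal{S}}\|\le\varepsilon$ for all $k\in\{0,\dots,N-1\}$, where $\varepsilon>0$. Let $\zeta_{\mathcal{S}}\ge1$ and $\eta_{\mathcal{S}}\in(0,1)$ be such that $\|\Psi^{(t)}_{k_2,k_1}(\mathcal{S})\|\le\zeta_{\mathcal{S}}\eta_{\mathcal{S}}^{k_2-k_1}$ for all $0\le k_1\le k_2\le N$. If $\varepsilon\le\frac{1-\eta_{\mathcal{S}}}{2\|B_{\mathcal{S}}\|\zeta_{\mathcal{S}}}$, then for all $0\le k_1\le k_2\le N$, $$\|\hat\Psi^{(t)}_{k_2,k_1}(\mathcal{S})\|\le\zeta_{\mathcal{S}}\Big(\frac{1+\eta_{\mathcal{S}}}{2}\Big)^{k_2-k_1}.$$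
   Context: $A\in\mathbb{R}^{n\times n}$, $B=[B_1\ \cdots\ B_q]\in\mathbb{R}^{n\times m}$ with $B_i\in\mathbb{R}^{n\times m_i}$, actuator set $\mathcal{G}=\{1,\dots,q\}$, $H\ge1$ fixed; for $\mathcal{S}=\{i_1<\dots<i_H\}$, $B_{\mathcal{S}}=[B_{i_1}\ \cdots\ B_{i_H}]$. Horizon $N\ge1$, rounds $T\ge1$; for each $t\in[T]$: $Q^{(t)},Q_f^{(t)}\in\mathbb{S}^n_+$, $R^{(t)}\in\mathbb{S}^m_{++}$, $R^{(t)}_{\mathcal{S}}$ the principal submatrix for actuators in $\mathcal{S}$. Riccati recursion: $P^{(t)}_{N,\mathcal{S}}=Q_f^{(t)}$ and for $k=N-1,\dots,0$: $K^{(t)}_{k,\mathcal{S}}=-(B_{\mathcal{S}}^\top P^{(t)}_{k+1,\mathcal{S}}B_{\mathcal{S}}+R^{(t)}_{\mathcal{S}})^{-1}B_{\mathcal{S}}^\top P^{(t)}_{k+1,\mathcal{S}}A$, $P^{(t)}_{k,\mathcal{S}}=Q^{(t)}+A^\top P^{(t)}_{k+1,\mathcal{S}}A-A^\top P^{(t)}_{k+1,\mathcal{S}}B_{\mathcal{S}}(B_{\mathcal{S}}^\top P^{(t)}_{k+1,\mathcal{S}}B_{\mathcal{S}}+R^{(t)}_{\mathcal{S}})^{-1}B_{\mathcal{S}}^\top P^{(t)}_{k+1,\mathcal{S}}A$; $\hat K^{(t)}_{k,\mathcal{S}}$ are the gains from the same recursion with $(A,B_{\mathcal{S}})$ replaced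 by estimates $(\hat A,\hat B_{\mathcal{S}})$. $\Psi^{(t)}_{k_2,k_1}(\mathcal{S})=(A+B_{\mathcal{S}}K^{(t)}_{k_2-1,\mathcal{S}})\cdots(A+B_{\mathcal{S}}K^{(t)}_{k_1,\mathcal{S}})$ and $\hat\Psi^{(t)}_{k_2,k_1}(\mathcal{S})=(A+B_{\mathcal{S}}\hat K^{(t)}_{k_2-1,\mathcal{S}})\cdots(A+B_{\mathcal{S}}\hat K^{(t)}_{k_1,\mathcal{S}})$ for $k_2>k_1$, both equal to $I$ when $k_2=k_1$. Assumption 1: for all $t$, $Q_f^{(t)}\succ0$, $\sigma_n(Q^{(t)})\ge1$, $\sigma_m(R^{(t)})\ge1$. Assumption 2: there are $\ell\in\{1,\dots,n-1\}$ and $\nu>0$ with $\sigma_n([B_{\mathcal{S}}\ AB_{\mathcal{S}}\ \cdots\ A^{\ell-1}B_{\mathcal{S}}])\ge\nu$ for all $|\mathcal{S}|=H$. *)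

From HB Require Import structures.
From mathcomp Require Import all_boot all_order all_algebra.
From mathcomp Require Import boolp classical_sets reals.
Set Implicit Arguments. Unset Strict Implicit. Unset Printing Implicit Defensive.
Import Order.TTheory GRing.Theory Num.Theory.
Local Open Scope ring_scope.
Local Open Scope classical_set_scope.

Section Defs.
Variable R : realType.

Definition vnorm (p : nat) (x : 'cV[R]_p) : R := Num.sqrt (\sum_i (x i 0) ^+ 2).

Definition opnorm (p r : nat) (M : 'M[R]_(p, r)) : R :=
  sup [set vnorm (M *m x) | x in [set x : 'cV[R]_r | vnorm x <= 1]].

(* smallest (p-th) singular value of a p x r matrix:
   sigma_p(M) = min_{||x||=1} ||M^T x||  (x in R^p) *)
Definition sigma_min (p r : nat) (M : 'M[R]_(p, r)) : R :=
  inf [set vnorm (M^T *m x) | x in [set x : 'cV[R]_p | vnorm x = 1]].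

Definition psd (p : nat) (M : 'M[R]_p) : Prop :=
  M^T = M /\ forall x : 'cV[R]_p, 0 <= (x^T *m M *m x) 0 0.
Definition pd (p : nat) (M : 'M[R]_p) : Prop :=
  M^T = M /\ forall x : 'cV[R]_p, x != 0 -> 0 < (x^T *m M *m x) 0 0.

(* Actuators: the m columns of B are split into q contiguous, ordered blocks
   B_1 ... B_q; [act j] is the actuator owning column j ([act] nondecreasing). *)
Definition act_cols (m q : nat) (act : 'I_m -> 'I_q) (S : {set 'I_q}) : {set 'I_m} :=
  [set j | act j \in S].

(* B_S = [B_{i_1} ... B_{i_H}] : the columns of actuators in S, in order *)
Definition selB (n m q : nat) (act : 'I_m -> 'I_q) (S : {set 'I_q})
  (B : 'M[R]_(n, m)) : 'M[R]_(n, #|act_cols act S|) :=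
  colsub (fun j : 'I_#|act_cols act S| => enum_val j) B.

Definition selR (m q : nat) (act : 'I_m -> 'I_q) (S : {set 'I_q})
  (Rc : 'M[R]_m) : 'M[R]_#|act_cols act S| :=
  mxsub (fun j : 'I_#|act_cols act S| => enum_val j)
        (fun j : 'I_#|act_cols act S| => enum_val j) Rc.

Section Riccati.
Variables (n p : nat) (A : 'M[R]_n) (Bs : 'M[R]_(n, p))
          (Q Qf : 'M[R]_n) (Rs : 'M[R]_p) (N : nat).

Definition ric_step (P : 'M[R]_n) : 'M[R]_n :=
  Q + A^T *m P *m A
    - A^T *m P *m Bs *m invmx (Bs^T *m P *m Bs + Rs) *m Bs^T *m P *m A.

(* Pj j = P_{N-j} *)
Fixpoint ric_back (j : nat) : 'M[R]_n :=
  match j with 0 => Qf | j'.+1 => ric_step (ric_back j') end.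

Definition ricP (k : nat) : 'M[R]_n := ric_back (N - k).

Definition ricK (k : nat) : 'M[R]_(p, n) :=
  - (invmx (Bs^T *m ricP k.+1 *m Bs + Rs) *m Bs^T *m ricP k.+1 *m A).
End Riccati.

Fixpoint prodL (n : nat) (M : nat -> 'M[R]_n) (k1 d : nat) : 'M[R]_n :=
  match d with 0 => 1%:M | d'.+1 => M (k1 + d')%N *m prodL M k1 d' end.

(* Psi_{k2,k1} = M (k2-1) ... M k1 , = I when k2 = k1 *)
Definition Psi (n : nat) (M : nat -> 'M[R]_n) (k2 k1 : nat) : 'M[R]_n :=
  prodL M k1 (k2 - k1).

Fixpoint ctrb (n p : nat) (A : 'M[R]_n) (Bs : 'M[R]_(n, p)) (l : nat)
  : 'M[R]_(n, l * p) :=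
  match l return 'M[R]_(n, l * p) with
  | 0 => 0
  | l'.+1 => row_mx Bs (A *m ctrb A Bs l')
  end.

End Defs.

From HB Require Import structures.
From mathcomp Require Import all_boot all_order all_algebra.
From mathcomp Require Import boolp classical_sets reals.
From mathcomp Require Import zify ring lra.
Set Implicit Arguments. Unset Strict Implicit. Unset Printing Implicit Defensive.
Import Order.TTheory GRing.Theory Num.Theory.
Local Open Scope ring_scope.

(* Write M_k = A + B_S K_k and Mh_k = A + B_S Khat_k.  Telescoping gives
     Psihat_{k1+e,k1} = Psi_{k1+e,k1}
        + sum_{i<e} Psi_{k1+e,k1+i+1} (Mh_{k1+i} - M_{k1+i}) Psihat_{k1+i,k1},
   and ||Mh_k - M_k|| <= ||B_S|| eps =: delta.  By strong induction on e, with
   rho = (1 + eta)/2, the norm is at most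
     zeta eta^e + zeta (zeta delta) sum_{i<e} eta^(e-1-i) rho^i
       <= zeta eta^e + zeta (rho - eta) sum_{i<e} eta^(e-1-i) rho^i = zeta rho^e,
   because the bound on eps says exactly zeta delta <= (1 - eta)/2 = rho - eta. *)

Lemma sqr_sum_mul_le (F : realFieldType) (I : finType) (a b : I -> F) :
  (\sum_i a i * b i) ^+ 2 <= (\sum_i a i ^+ 2) * (\sum_i b i ^+ 2).
Proof.
set ab := \sum_i _; set aa := \sum_i _; set bb := \sum_i _.
have aa_ge0 : 0 <= aa by apply: sumr_ge0 => i _; exact: sqr_ge0.
have [bb0 | bb_neq0] := eqVneq bb 0.
  have b0 i : b i = 0.
    apply/eqP; rewrite -sqrf_eq0; apply/eqP.
    by move/psumr_eq0P: bb0 => -> // j _; exact: sqr_ge0.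
  by rewrite /ab big1 ?expr0n ?bb0 ?mulr0 // => i _; rewrite b0 mulr0.
have bb_gt0 : 0 < bb by rewrite lt_def bb_neq0 sumr_ge0 // => i _; exact: sqr_ge0.
have : 0 <= \sum_i (bb * a i - ab * b i) ^+ 2 by apply: sumr_ge0 => i _; exact: sqr_ge0.
have -> : \sum_i (bb * a i - ab * b i) ^+ 2 = bb * (bb * aa - ab ^+ 2).
  rewrite (eq_bigr (fun i => bb ^+ 2 * a i ^+ 2 - 2 * bb * ab * (a i * b i)
                             + ab ^+ 2 * b i ^+ 2)) => [|i _]; last by ring.
  by rewrite big_split sumrB -!mulr_sumr /= -/aa -/ab -/bb; ring.
by rewrite pmulr_rge0 // subr_ge0 mulrC.
Qed.

Section EuclideanNorm.
Variables (R : realType) (p : nat).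
Implicit Types (x y : 'cV[R]_p) (a : R).

Lemma vnorm_ge0 x : 0 <= vnorm x.
Proof. exact: sqrtr_ge0. Qed.

Lemma vnorm_sqr x : vnorm x ^+ 2 = \sum_i x i 0 ^+ 2.
Proof. by rewrite sqr_sqrtr // sumr_ge0 // => i _; exact: sqr_ge0. Qed.

Lemma vnorm0 : vnorm (0 : 'cV[R]_p) = 0.
Proof. by rewrite /vnorm big1 ?sqrtr0 // => i _; rewrite mxE expr0n. Qed.

Lemma vnorm_eq0 x : vnorm x = 0 -> x = 0.
Proof.
move=> x0; have : \sum_i x i 0 ^+ 2 = 0 by rewrite -vnorm_sqr x0 expr0n.
move/psumr_eq0P => xi0; apply/matrixP => i j; rewrite (ord1 j) mxE.
by apply/eqP; rewrite -sqrf_eq0 xi0 // => k _; exact: sqr_ge0.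
Qed.

Lemma vnormZ a x : vnorm (a *: x) = `|a| * vnorm x.
Proof.
rewrite /vnorm -sqrtr_sqr -sqrtrM ?sqr_ge0 // mulr_sumr.
by congr Num.sqrt; apply: eq_bigr => i _; rewrite mxE exprMn.
Qed.

Lemma vnormN x : vnorm (- x) = vnorm x.
Proof. by rewrite -scaleN1r vnormZ normrN normr1 mul1r. Qed.

Lemma ler_vnormD x y : vnorm (x + y) <= vnorm x + vnorm y.
Proof.
have dot_le : \sum_i x i 0 * y i 0 <= vnorm x * vnorm y.
  apply: le_trans (ler_norm _) _.
  rewrite -sqrtr_sqr -[vnorm x * vnorm y]ger0_norm ?mulr_ge0 ?vnorm_ge0 //.
  by rewrite -sqrtr_sqr ler_sqrt ?sqr_ge0 // exprMn !vnorm_sqr sqr_sum_mul_le.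
rewrite -(ger0_norm (addr_ge0 (vnorm_ge0 x) (vnorm_ge0 y))) -sqrtr_sqr.
rewrite /vnorm ler_sqrt ?sqr_ge0 // -/(vnorm x) -/(vnorm y) sqrrD !vnorm_sqr.
have -> : \sum_i (x + y) i 0 ^+ 2
          = \sum_i x i 0 ^+ 2 + (\sum_i x i 0 * y i 0) *+ 2 + \sum_i y i 0 ^+ 2.
  by rewrite -sumrMnl -!big_split; apply: eq_bigr => i _; rewrite mxE sqrrD.
by rewrite lerD2r lerD2l lerMn2r.
Qed.

Lemma ler_entry_vnorm x i : `|x i 0| <= vnorm x.
Proof.
rewrite -sqrtr_sqr ler_sqrt ?sumr_ge0 // => [|j _]; last exact: sqr_ge0.
by rewrite (bigD1 i) //= lerDl sumr_ge0 // => j _; exact: sqr_ge0.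
Qed.

End EuclideanNorm.

Section OperatorNorm.
Variable R : realType.
Implicit Types (p r s : nat).

Lemma opnorm_has_sup p r (M : 'M[R]_(p, r)) :
  has_sup [set vnorm (M *m x) | x in [set x : 'cV[R]_r | vnorm x <= 1]]%classic.
Proof.
split; first by exists (vnorm (M *m 0)), 0 => //=; rewrite vnorm0.
exists (Num.sqrt (\sum_i (\sum_j `|M i j|) ^+ 2)) => _ [x /= x_le1 <-].
rewrite ler_sqrt ?sumr_ge0 // => [|i _]; last exact: sqr_ge0.
apply: ler_sum => i _; rewrite -real_normK ?num_real // mxE.
rewrite ler_pXn2r ?nnegrE ?sumr_ge0 //; apply: le_trans (ler_norm_sum _ _ _) _.
apply: ler_sum => j _; rewrite normrM ler_piMr //.
exact: le_trans (ler_entry_vnorm _ _) x_le1.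
Qed.

Lemma vnorm_mulmx_le_opnorm p r (M : 'M[R]_(p, r)) x :
  vnorm x <= 1 -> vnorm (M *m x) <= opnorm M.
Proof. by move=> x_le1; apply: sup_upper_bound (opnorm_has_sup M) _ _; exists x. Qed.

Lemma opnorm_ge0 p r (M : 'M[R]_(p, r)) : 0 <= opnorm M.
Proof. by rewrite -(vnorm0 R p) -(mulmx0 _ M) vnorm_mulmx_le_opnorm // vnorm0. Qed.

Lemma ge_opnorm p r (M : 'M[R]_(p, r)) c :
  (forall x, vnorm x <= 1 -> vnorm (M *m x) <= c) -> opnorm M <= c.
Proof. by move=> Mc; apply: ge_sup => [|_ [x /Mc + <-]] //; case: (opnorm_has_sup M). Qed.

Lemma vnorm_mulmx_le p r (M : 'M[R]_(p, r)) x : vnorm (M *m x) <= opnorm M * vnorm x.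
Proof.
have [x0 | x_neq0] := eqVneq (vnorm x) 0.
  by rewrite (vnorm_eq0 x0) mulmx0 !vnorm0 mulr0.
have x_gt0 : 0 < vnorm x by rewrite lt_def x_neq0 vnorm_ge0.
have := vnorm_mulmx_le_opnorm M (x := (vnorm x)^-1 *: x).
rewrite -scalemxAr !vnormZ ger0_norm ?invr_ge0 ?vnorm_ge0 // mulVf // => /(_ (lexx _)).
by rewrite -ler_pdivrMr // mulrC.
Qed.

Lemma ler_opnormD p r (M1 M2 : 'M[R]_(p, r)) : opnorm (M1 + M2) <= opnorm M1 + opnorm M2.
Proof.
apply: ge_opnorm => x x_le1; rewrite mulmxDl; apply: le_trans (ler_vnormD _ _) _.
by apply: lerD; apply: vnorm_mulmx_le_opnorm.
Qed.

Lemma opnormN p r (M : 'M[R]_(p, r)) : opnorm (- M) = opnorm M.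
Proof.
have le_opnormN (M' : 'M[R]_(p, r)) : opnorm (- M') <= opnorm M'.
  by apply: ge_opnorm => x x_le1; rewrite mulNmx vnormN vnorm_mulmx_le_opnorm.
by apply/le_anti; rewrite le_opnormN -{1}[M]opprK le_opnormN.
Qed.

Lemma ler_opnormM p r s (M1 : 'M[R]_(p, r)) (M2 : 'M[R]_(r, s)) :
  opnorm (M1 *m M2) <= opnorm M1 * opnorm M2.
Proof.
apply: ge_opnorm => x x_le1; rewrite -mulmxA; apply: le_trans (vnorm_mulmx_le _ _) _.
apply: ler_wpM2l; first exact: opnorm_ge0.
apply: le_trans (vnorm_mulmx_le _ _) _.
by rewrite ler_piMr ?opnorm_ge0.
Qed.

Lemma ler_opnorm_sum p r (I : Type) (s : seq I) (P : pred I) (F : I -> 'M[R]_(p, r)) :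
  opnorm (\sum_(i <- s | P i) F i) <= \sum_(i <- s | P i) opnorm (F i).
Proof.
apply: (big_ind2 (fun M c => opnorm M <= c)) => //.
  by apply: ge_opnorm => x _; rewrite mul0mx vnorm0.
by move=> ? ? ? ? ? ?; apply: le_trans (ler_opnormD _ _) (lerD _ _).
Qed.

End OperatorNorm.

Lemma telescope_geometric_bound (F : realFieldType) (zeta eta rho delta : F) e :
  0 <= zeta -> 0 <= eta <= rho -> zeta * delta <= rho - eta ->
  zeta * eta ^+ e + \sum_(i < e) (zeta * eta ^+ (e - i.+1) * delta) * (zeta * rho ^+ i)
    <= zeta * rho ^+ e.
Proof.
move=> zeta_ge0 /andP[eta_ge0 eta_le_rho] zeta_delta.
set s := \sum_(i < e) eta ^+ (e - i.+1) * rho ^+ i.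
have s_ge0 : 0 <= s by rewrite sumr_ge0 // => i _; rewrite mulr_ge0 ?exprn_ge0 ?(le_trans eta_ge0).
have telescope : (rho - eta) * s = rho ^+ e - eta ^+ e.
  rewrite subrXX (reindex_inj rev_ord_inj) /=; congr (_ * _); apply: eq_bigr => i _.
  by rewrite mulrC; congr (_ ^+ _ * _ ^+ _); have := ltn_ord i; lia.
have -> : \sum_(i < e) (zeta * eta ^+ (e - i.+1) * delta) * (zeta * rho ^+ i)
          = zeta * (zeta * delta) * s.
  by rewrite /s !mulr_sumr; apply: eq_bigr => i _; ring.
have : zeta * (zeta * delta) * s <= zeta * (rho - eta) * s.
  by rewrite ler_wpM2r // ler_wpM2l.
by rewrite -(mulrA zeta (rho - eta)) telescope; lra.
Qed.

Lemma prodL_telescope (R : realType) n (M Mh : nat -> 'M[R]_n) k d :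
  prodL Mh k d = prodL M k d +
    \sum_(i < d) prodL M (k + i).+1 (d - i.+1) *m (Mh (k + i)%N - M (k + i)%N) *m prodL Mh k i.
Proof.
elim: d => [|d IH]; first by rewrite big_ord0 addr0.
rewrite big_ord_recr /= subnn mul1mx.
have -> : \sum_(i < d) prodL M (k + i).+1 (d.+1 - i.+1) *m (Mh (k + i)%N - M (k + i)%N)
                         *m prodL Mh k i
          = M (k + d)%N *m \sum_(i < d) prodL M (k + i).+1 (d - i.+1)
                                        *m (Mh (k + i)%N - M (k + i)%N) *m prodL Mh k i.
  rewrite mulmx_sumr; apply: eq_bigr => i _; have := ltn_ord i => lt_id.
  rewrite (_ : (d.+1 - i.+1 = (d - i.+1).+1)%N); last by lia.
  by rewrite /= (_ : ((k + i).+1 + (d - i.+1) = k + d)%N) ?mulmxA //; lia.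
by rewrite addrA -mulmxDr -IH mulmxBl addrC subrK.
Qed.

Section PerturbedProduct.
Variables (R : realType) (n N : nat) (M Mh : nat -> 'M[R]_n) (zeta eta rho delta : R).
Hypotheses (zeta_ge0 : 0 <= zeta) (eta_ge0_le_rho : 0 <= eta <= rho).
Hypothesis zeta_delta : zeta * delta <= rho - eta.
Hypothesis opnorm_prodL_le : forall k e, (k + e <= N)%N -> opnorm (prodL M k e) <= zeta * eta ^+ e.
Hypothesis opnorm_sub_le : forall k, (k < N)%N -> opnorm (Mh k - M k) <= delta.

Lemma opnorm_prodL_perturbed_le k e :
  (k + e <= N)%N -> opnorm (prodL Mh k e) <= zeta * rho ^+ e.
Proof.
elim/ltn_ind: e => e IH keN; rewrite (prodL_telescope M).
apply: le_trans (ler_opnormD _ _)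
  (le_trans _ (telescope_geometric_bound e zeta_ge0 eta_ge0_le_rho zeta_delta)).
apply: lerD; first exact: opnorm_prodL_le.
apply: le_trans (ler_opnorm_sum _ _ _) _; apply: ler_sum => i _; have := ltn_ord i => lt_ie.
have left_le : opnorm (prodL M (k + i).+1 (e - i.+1)) <= zeta * eta ^+ (e - i.+1).
  by apply: opnorm_prodL_le; lia.
have mid_le : opnorm (Mh (k + i)%N - M (k + i)%N) <= delta by apply: opnorm_sub_le; lia.
have right_le : opnorm (prodL Mh k i) <= zeta * rho ^+ i by apply: IH; lia.
apply: le_trans (ler_opnormM _ _) (ler_pM _ _ _ right_le); rewrite ?opnorm_ge0 //.
exact: le_trans (ler_opnormM _ _) (ler_pM (opnorm_ge0 _) (opnorm_ge0 _) left_le mid_le).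
Qed.

End PerturbedProduct.

Unset Implicit Arguments.

Theorem lemma6 (R : realType) (n m q H N T : nat)
  (act : 'I_m -> 'I_q)
  (A Ahat : 'M[R]_n) (B Bhat : 'M[R]_(n, m))
  (Q Qf : 'I_T -> 'M[R]_n) (Rc : 'I_T -> 'M[R]_m)
  (l : nat) (nu : R)
  (t : 'I_T) (S : {set 'I_q})
  (eps zeta eta : R) :
  (* standing setting *)
  (0 < H)%N -> (0 < N)%N ->
  {homo act : i j / (i <= j)%N >-> (i <= j)%N} ->
  (forall s : 'I_T, psd (Q s) /\ psd (Qf s) /\ pd (Rc s)) ->
  (* Assumption 1 *)
  (forall s : 'I_T, pd (Qf s) /\ 1 <= sigma_min (Q s) /\ 1 <= sigma_min (Rc s)) ->
  (* Assumption 2 *)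
  (1 <= l)%N -> (l <= n - 1)%N -> 0 < nu ->
  (forall S' : {set 'I_q}, #|S'| = H ->
     nu <= sigma_min (ctrb A (selB act S' B) l)) ->
  (* the lemma *)
  #|S| = H ->
  0 < eps ->
  (forall k : nat, (k < N)%N ->
     opnorm (ricK A (selB act S B) (Q t) (Qf t) (selR act S (Rc t)) N k
             - ricK Ahat (selB act S Bhat) (Q t) (Qf t) (selR act S (Rc t)) N k)
     <= eps) ->
  1 <= zeta -> 0 < eta < 1 ->
  (forall k1 k2 : nat, (k1 <= k2)%N -> (k2 <= N)%N ->
     opnorm (Psi (fun k => A + selB act S B *m
                   ricK A (selB act S B) (Q t) (Qf t) (selR act S (Rc t)) N k) k2 k1)
     <= zeta * eta ^+ (k2 - k1)) ->
  eps <= (1 - eta) / (2 * opnorm (selB act S B) * zeta) ->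
  forall k1 k2 : nat, (k1 <= k2)%N -> (k2 <= N)%N ->
    opnorm (Psi (fun k => A + selB act S B *m
                  ricK Ahat (selB act S Bhat) (Q t) (Qf t) (selR act S (Rc t)) N k) k2 k1)
    <= zeta * ((1 + eta) / 2) ^+ (k2 - k1).
Proof.
move=> _ _ _ _ _ _ _ _ _ _ _ gain_gap zeta_ge1 /andP[eta_gt0 eta_lt1] Psi_le eps_le.
set Bs := selB act S B.
set Rs := selR act S (Rc t).
set K := ricK A Bs (Q t) (Qf t) Rs N; set Kh := ricK Ahat (selB act S Bhat) (Q t) (Qf t) Rs N.
have Bs_ge0 := opnorm_ge0 Bs.
have closed_loop_gap k : (k < N)%N ->
    opnorm ((A + Bs *m Kh k) - (A + Bs *m K k)) <= opnorm Bs * eps.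
  move=> kN; rewrite opprD addrACA subrr add0r -mulmxBr.
  by rewrite (le_trans (ler_opnormM _ _)) // ler_wpM2l // -opprB opnormN gain_gap.
have zeta_delta : zeta * (opnorm Bs * eps) <= (1 + eta) / 2 - eta.
  have [-> | Bs_neq0] := eqVneq (opnorm Bs) 0; first by rewrite mul0r mulr0; lra.
  have Bs_gt0 : 0 < opnorm Bs by rewrite lt_def Bs_neq0.
  by move: eps_le; rewrite ler_pdivlMr ?mulr_gt0 //; lra.
move=> k1 k2 k12 k2N; rewrite /Psi.
apply: (opnorm_prodL_perturbed_le (M := fun k => A + Bs *m K k) (N := N)
          (zeta := zeta) (eta := eta) (delta := opnorm Bs * eps)) => //.
- lra.
- by rewrite (ltW eta_gt0); lra.
- by move=> k e keN; have := Psi_le k (k + e)%N (leq_addr _ _) keN; rewrite /Psi addKn.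
- by rewrite subnKC.
Qed.
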